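(* Let $R=DV$ be any decomposition of the boundary matrix of the cone filtration, and let $\omega*\sigma,\omega*\tau$ (with $\sigma,\tau\in K$) form a persistence pair, i.e. $\operatorname{low}R[\omega*\tau]=\omega*\sigma$; set $d=\max\sigma$ and $b=\max\tau$ (so $d>b$). Let $\gamma$ be the restriction of $V[\omega*\tau]$ to cone simplices and let $z=(\partial\gamma)\cap K$ be the restriction of $\partial\gamma$ to base simplices. Then $z$ is supported in $K_{\ge b}$, $\partial z$ is supported in $K_{\ge d}$ (so $[z]\in H(K_{\ge b},K_{\ge d})$), $\tau\in z$, and $\sigma\in\partial z$.
   Context: Coefficients are in a field $\mathbb F$. Let $K$ be a finite $\Delta$-complex in which every simplex $\sigma$ carries an integer interval $T(\sigma)=[\min\sigma,\max\sigma]$ with $\min\sigma<\max\sigma$, such that whenever $\sigma$ is a proper face of $\tau$, $\min\sigma<\min\tau<\max\tau<\max\sigma$; assume the values $\min\sigma$ ($\sigma\in K$) are pairwise distinct and the values $\max\sigma$ are pairwise distinct. Write $K_{\le i}=\{\sigma:\min\sigma\le i\}$, $K_{\ge j}=\{\sigma:\max\sigma\ge j\}$ (subcomplexes), and $K[b,d]=K_{\ge b}\cap K_{\le d}$. The cone $\omega*K$ consists of the simplices of $K$ (''base simplices''), a new vertex $\omega$, and simplices $\omega*\sigma$ for $\sigma\in K$ (''cone simplices''), with $\partial(\omega*\sigma)=\sigma-\omega*\partial\sigma$ (for a vertex $v$, $\partial(\omega*v)=v-\omega$). The cone filtration orders base simplices by increasing $\min$, then $\omega$, then the simplices $\omega*\sigma$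 by decreasing $\max\sigma$. $D$ is the boundary matrix of $\omega*K$ with rows and columns in this order; $R=DV$ denotes a decomposition with $V$ invertible upper-triangular and $R$ reduced (pivots $\operatorname{low}$ — lowest nonzero entries — of nonzero columns in distinct rows). ''$\sigma\in c$'' means the coefficient of $\sigma$ in chain $c$ is nonzero; a chain is supported in a subcomplex $L$ if all its nonzero coefficients are on simplices of $L$. *)

From HB Require Import structures.
From mathcomp Require Import all_boot all_order all_algebra.
Set Implicit Arguments. Unset Strict Implicit. Unset Printing Implicit Defensive.
Import Order.TTheory GRing.Theory Num.Theory.
Local Open Scope ring_scope.

Definition delta_complex (S : finType) (dim : S -> nat) (face : S -> nat -> S) :=
  (forall s i, (0 < dim s)%N -> (i <= dim s)%N -> dim (face s i) = (dim s).-1)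
  /\ (forall s i j, (2 <= dim s)%N -> (i < j)%N -> (j <= dim s)%N ->
        face (face s j) i = face (face s i) j.-1).

Definition facet (S : finType) (dim : S -> nat) (face : S -> nat -> S) : rel S :=
  fun s t => (0 < dim s)%N && [exists i : 'I_(dim s).+1, face s i == t].

Definition proper_face (S : finType) (dim : S -> nat) (face : S -> nat -> S)
    (t s : S) : bool :=
  (t != s) && connect (facet dim face) s t.

Definition interval_filtration (S : finType) (dim : S -> nat) (face : S -> nat -> S)
    (mn mx : S -> int) :=
  [/\ forall s, mn s < mx s,
      forall t s, proper_face dim face t s ->
        [/\ mn t < mn s, mn s < mx s & mx s < mx t],
      injective mn
    & injective mx].

Definition bd (F : fieldType) (S : finType) (dim : S -> nat) (face : S -> nat -> S)
    (s t : S) : F :=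
  if dim s == 0%N then 0
  else \sum_(i < (dim s).+1) (-1) ^+ i * (face s i == t)%:R.

(* The cone omega * K.  Simplices: Some (false, s) = base simplex s,    *)
(* None = the apex omega, Some (true, s) = cone simplex omega * s.      *)
Definition cone_simplex (S : finType) : finType := option (bool * S)%type.

Definition Base (S : finType) (s : S) : cone_simplex S := Some (false, s).
Definition Omega (S : finType) : cone_simplex S := None.
Definition Cone (S : finType) (s : S) : cone_simplex S := Some (true, s).

(* cbd y x = coefficient of x in the boundary of y, with
   d(omega*s) = s - omega*(d s), and d(omega*v) = v - omega for a vertex v. *)
Definition cbd (F : fieldType) (S : finType) (dim : S -> nat) (face : S -> nat -> S)
    (y x : cone_simplex S) : F :=
  match y, x with
  | Some (false, s), Some (false, t) => @bd F _ dim face s t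
  | Some (true, s), Some (false, t) => (t == s)%:R
  | Some (true, s), None => if dim s == 0%N then -1 else 0
  | Some (true, s), Some (true, t) => - @bd F _ dim face s t
  | _, _ => 0
  end.

(* Boundary matrix D of the cone: D x y = entry in row x, column y. *)
Definition Dmat (F : fieldType) (S : finType) (dim : S -> nat) (face : S -> nat -> S)
    (x y : cone_simplex S) : F := @cbd F _ dim face y x.

Definition cone_le (S : finType) (mn mx : S -> int) (x y : cone_simplex S) : bool :=
  match x, y with
  | Some (false, s), Some (false, t) => mn s <= mn t
  | Some (false, _), _ => true
  | None, Some (false, _) => false
  | None, _ => true
  | Some (true, s), Some (true, t) => mx t <= mx s
  | Some (true, _), _ => false
  end.

Definition cone_lt (S : finType) (mn mx : S -> int) (x y : cone_simplex S) : bool :=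
  cone_le mn mx x y && (x != y).

Definition cmatrix (F : fieldType) (S : finType) := cone_simplex S -> cone_simplex S -> F.

Definition cmul (F : fieldType) (S : finType) (A B : cmatrix F S) : cmatrix F S :=
  fun x y => \sum_(z : cone_simplex S) A x z * B z y.

Definition cid (F : fieldType) (S : finType) : cmatrix F S :=
  fun x y => (x == y)%:R.

Definition upper_triangular (F : fieldType) (S : finType) (mn mx : S -> int)
    (V : cmatrix F S) :=
  forall x y, cone_lt mn mx y x -> V x y = 0.

Definition invertible (F : fieldType) (S : finType) (V : cmatrix F S) :=
  exists W : cmatrix F S, cmul V W = @cid F S /\ cmul W V = @cid F S.

Definition is_low (F : fieldType) (S : finType) (mn mx : S -> int)
    (R : cmatrix F S) (y x : cone_simplex S) :=
  R x y != 0 /\ forall x', cone_lt mn mx x x' -> R x' y = 0.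

Definition reduced (F : fieldType) (S : finType) (mn mx : S -> int) (R : cmatrix F S) :=
  forall y1 y2 x, is_low mn mx R y1 x -> is_low mn mx R y2 x -> y1 = y2.

Definition RDV_decomposition (F : fieldType) (S : finType) (dim : S -> nat)
    (face : S -> nat -> S) (mn mx : S -> int) (R V : cmatrix F S) :=
  [/\ R = cmul (@Dmat F _ dim face) V,
      upper_triangular mn mx V,
      invertible V
    & reduced mn mx R].

Definition restr_cone (F : fieldType) (S : finType) (V : cmatrix F S)
    (y : cone_simplex S) : cone_simplex S -> F :=
  fun x => match x with Some (true, _) => V x y | _ => 0 end.

Definition cone_chain_bd (F : fieldType) (S : finType) (dim : S -> nat)
    (face : S -> nat -> S) (c : cone_simplex S -> F) : cone_simplex S -> F :=
  fun x => \sum_(y : cone_simplex S) @cbd F _ dim face y x * c y.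

Definition restr_base (F : fieldType) (S : finType) (c : cone_simplex S -> F) : S -> F :=
  fun t => c (Base t).

Definition chain_bd (F : fieldType) (S : finType) (dim : S -> nat)
    (face : S -> nat -> S) (c : S -> F) : S -> F :=
  fun t => \sum_(s : S) @bd F _ dim face s t * c s.

Definition supported_ge (F : fieldType) (S : finType) (mx : S -> int) (c : S -> F) (j : int) :=
  forall t, c t != 0 -> j <= mx t.

From HB Require Import structures.
From mathcomp Require Import all_boot all_order all_algebra.
Import Order.TTheory GRing.Theory Num.Theory.
Local Open Scope ring_scope.

(* Let c be the chain s |-> V[omega*tau](omega*s) of K.  Since the boundary of
   omega*s is s - omega*(ds), the base part z of the boundary of the cone part
   of V[omega*tau] is c itself, and the cone part of R[omega*tau] = D V[omega*tau]
   is -dc.  Everything then follows from the cone filtration order: V is upper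
   triangular, so c vanishes on every omega*t filtered after omega*tau (max t < b),
   and is nonzero at tau because an invertible triangular matrix has a nonzero
   diagonal; R[omega*tau] has its pivot at omega*sigma, so dc vanishes on every
   omega*t filtered after omega*sigma (max t < d) and is nonzero at sigma. *)

Lemma sum_cone_simplex (M : nmodType) (S : finType) (f : cone_simplex S -> M) :
  \sum_x f x = f (Omega S) + \sum_s f (Base s) + \sum_s f (Cone s).
Proof.
rewrite -addrA [X in _ + X]addrC -(big_bool _ (fun b => \sum_s f (Some (b, s)))).
rewrite pair_bigA (bigD1 (Omega S)) // (reindex_omap Some id) => [|[]//].
by apply: (congr1 (fun X => f (Omega S) + X)); apply: eq_big => [[b s]|[b s] _];
  rewrite ?eqxx.
Qed.

Section ConeOrder.

Context {S : finType} {mn mx : S -> int}.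
Hypotheses (inj_mn : injective mn) (inj_mx : injective mx).

Local Notation cle := (cone_le mn mx).
Local Notation clt := (cone_lt mn mx).

Lemma cone_le_trans {x y z} : cle x y -> cle y z -> cle x z.
Proof.
case: x => [[[] s]|]; case: y => [[[] t]|]; case: z => [[[] u]|] //=.
- by move=> h1 h2; exact: le_trans h2 h1.
- by move=> h1 h2; exact: le_trans h1 h2.
Qed.

Lemma cone_le_total : total cle.
Proof. by case=> [[[] s]|]; case=> [[[] t]|] //=; exact: le_total. Qed.

Lemma cone_le_anti : antisymmetric cle.
Proof.
case=> [[[] s]|]; case=> [[[] t]|] //= /andP[h1 h2].
- by rewrite /Cone (@inj_mx s t) //; apply/eqP; rewrite eq_le h1 h2.
- by rewrite (@inj_mn s t) //; apply/eqP; rewrite eq_le h1 h2.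
Qed.

Lemma cone_lt_irr x : ~~ clt x x.
Proof. by rewrite /cone_lt eqxx andbF. Qed.

Lemma cone_lt_trans {x y z} : clt x y -> clt y z -> clt x z.
Proof.
move=> /andP[lexy neqxy] /andP[leyz _].
rewrite /cone_lt (cone_le_trans lexy leyz); apply: contra neqxy => /eqP exz.
by rewrite -exz in leyz; apply/eqP/cone_le_anti; rewrite lexy leyz.
Qed.

Lemma cone_lt_total {x y} : x != y -> clt x y || clt y x.
Proof. by move=> neqxy; rewrite /cone_lt neqxy eq_sym neqxy !andbT cone_le_total. Qed.

Lemma cone_lt_Cone s t : clt (Cone s) (Cone t) = (mx t < mx s).
Proof.
rewrite /cone_lt /= lt_def andbC; congr (~~ _ && _).
by apply/eqP/eqP => [[->]|/inj_mx->].
Qed.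

Lemma cone_lt_ind (P : cone_simplex S -> Prop) :
  (forall y, (forall x, clt x y -> P x) -> P y) -> forall y, P y.
Proof.
move=> IH; suff le_card_P n y : (#|[set x | clt x y]| <= n)%N -> P y.
  by move=> y; exact: le_card_P _ y (leqnn _).
elim: n y => [|n IHn] y le_card; apply: IH => x ltxy.
  by move: le_card; rewrite leqn0 => /eqP/cards0_eq/setP/(_ x); rewrite !inE ltxy.
apply: IHn; rewrite -ltnS; apply: leq_trans le_card; apply: proper_card.
apply/properP; split.
  by apply/subsetP => w; rewrite !inE => /cone_lt_trans; apply.
by exists x; rewrite !inE // cone_lt_irr.
Qed.

End ConeOrder.

Section Triangular.

Context {F : fieldType} {S : finType} {mn mx : S -> int}.
Hypotheses (inj_mn : injective mn) (inj_mx : injective mx).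
Context {V W : cmatrix F S}.
Hypotheses (V_ut : upper_triangular mn mx V) (WV1 : cmul W V = @cid F S).

(* Induction along the filtration: by induction hypothesis, the entry of W V
   at (x, y) with x >= y reduces to W x y * V y y. *)
Lemma upper_triangular_linv y :
  V y y != 0 /\ forall x, cone_lt mn mx y x -> W x y = 0.
Proof.
elim/(cone_lt_ind inj_mn inj_mx): y => y IH.
have WV_col x : x = y \/ cone_lt mn mx y x -> (x == y)%:R = W x y * V y y.
  move=> x_ge_y; rewrite -[LHS]/(cid F x y) -WV1 /cmul (bigD1 y) //=.
  rewrite big1 ?addr0 // => w neqwy.
  have [ltwy|] := boolP (cone_lt mn mx w y).
    have [_ ->] := IH w ltwy; first by rewrite mul0r.
    by case: x_ge_y => [->//|]; exact: cone_lt_trans ltwy.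
  by have /orP[->//|/V_ut->] := cone_lt_total (mn:=mn) (mx:=mx) neqwy; rewrite mulr0.
have Vyy : V y y != 0.
  apply: contra_neq (oner_neq0 F) => Vyy0.
  by have := WV_col y (or_introl erefl); rewrite eqxx Vyy0 mulr0 /= mulr1n.
split=> // x ltyx; have := WV_col x (or_intror ltyx).
have /negbTE-> : x != y by apply: contraTneq ltyx => ->; exact: cone_lt_irr.
by move/esym/eqP; rewrite mulf_eq0 (negbTE Vyy) orbF => /eqP.
Qed.

End Triangular.

Lemma invertible_upper_triangular_diag (F : fieldType) (S : finType)
    (mn mx : S -> int) (V : cmatrix F S) :
  injective mn -> injective mx ->
  upper_triangular mn mx V -> invertible V -> forall y, V y y != 0.
Proof.
move=> inj_mn inj_mx V_ut [W [_ WV1]] y.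
by case: (upper_triangular_linv inj_mn inj_mx V_ut WV1 y).
Qed.

Section ConeChains.

Context {F : fieldType} {S : finType} (dim : S -> nat) (face : S -> nat -> S).

Lemma restr_base_bd_restr_cone (V : cmatrix F S) y t :
  restr_base (cone_chain_bd dim face (restr_cone V y)) t = V (Cone t) y.
Proof.
rewrite /restr_base /cone_chain_bd sum_cone_simplex /= mulr0.
rewrite big1 ?add0r => [|s _]; last by rewrite mulr0.
rewrite (bigD1 t) //= eqxx mul1r big1 ?addr0 // => s neqst.
by rewrite eq_sym (negbTE neqst) mul0r.
Qed.

Lemma Dmat_mul_Cone (V : cmatrix F S) y t :
  cmul (Dmat F dim face) V (Cone t) y = - chain_bd dim face (fun s => V (Cone s) y) t.
Proof.
rewrite /cmul /Dmat sum_cone_simplex /= mul0r add0r.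
rewrite big1 ?add0r => [|s _]; last by rewrite mul0r.
by rewrite -sumrN; apply: eq_bigr => s _; rewrite mulNr.
Qed.

End ConeChains.

Theorem claim6p2 (F : fieldType) (S : finType) (dim : S -> nat)
    (face : S -> nat -> S) (mn mx : S -> int)
    (HK : delta_complex dim face)
    (Hfilt : interval_filtration dim face mn mx)
    (R V : cmatrix F S)
    (HRDV : RDV_decomposition dim face mn mx R V)
    (sigma tau : S)
    (Hpair : is_low mn mx R (Cone tau) (Cone sigma)) :
  let d := mx sigma in
  let b := mx tau in
  let z := restr_base (cone_chain_bd dim face (restr_cone V (Cone tau))) in
  [/\ supported_ge mx z b,
      supported_ge mx (chain_bd dim face z) d,
      z tau != 0
    & chain_bd dim face z sigma != 0].
Proof.
move=> d b z; case: HRDV => RDV V_ut V_inv _; case: Hfilt => _ _ inj_mn inj_mx.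
case: Hpair; rewrite RDV => Rpivot R_below.
have z_coef t : z t = V (Cone t) (Cone tau) := restr_base_bd_restr_cone dim face V _ t.
have bd_z t : chain_bd dim face z t = - cmul (Dmat F dim face) V (Cone t) (Cone tau).
  by rewrite Dmat_mul_Cone opprK; apply: eq_bigr => s _; rewrite z_coef.
split.
- move=> t; rewrite z_coef; apply: contra_neqT; rewrite -ltNge => ltt.
  by apply: V_ut; rewrite (cone_lt_Cone inj_mx).
- move=> t; rewrite bd_z oppr_eq0; apply: contra_neqT; rewrite -ltNge => ltt.
  by apply: R_below; rewrite (cone_lt_Cone inj_mx).
- by rewrite z_coef; exact: invertible_upper_triangular_diag inj_mn inj_mx V_ut V_inv _.
- by rewrite bd_z oppr_eq0.
Qed.
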